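(* For all integers $n$ and $\alpha$ with $n\le\alpha\le 2^n$, there exists a minimal $n$-state nondeterministic finite automaton accepting a star-free language whose equivalent minimal deterministic finite automaton has exactly $\alpha$ states.
   Context: Nondeterministic finite automata (NFAs) have a single initial state and a transition function $\delta:Q\times\Sigma\to 2^Q$ that may map to the empty set; a non-accepting sink state is not needed and not counted for NFAs. Deterministic finite automata (DFAs) are complete (every state has exactly one successor on every letter), so a sink state is counted. A minimal $n$-state NFA is an NFA with $n$ states such that no NFA with fewer states accepts the same language. A language $L\subseteq\Sigma^*$ is star-free if it can be obtained from the languages $\{a\}$, $a\in\Sigma$, by finitely many applications of union, complementation (with respect to $\Sigma^*$), and concatenation. *)

From mathcomp Require Import all_boot.
Set Implicit Arguments. Unset Strict Implicit. Unset Printing Implicit Defensive.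

Definition lang (Sigma : Type) := seq Sigma -> Prop.

(* NFA: single initial state, transition function Q x Sigma -> 2^Q (may be empty),
   set of final states. No sink state is required. *)
Record nfa (Sigma Q : finType) := NFA {
  nfa_init : Q;
  nfa_delta : Q -> Sigma -> {set Q};
  nfa_final : {set Q} }.

Definition nfa_step (Sigma Q : finType) (A : nfa Sigma Q) (S : {set Q}) (a : Sigma)
  : {set Q} := \bigcup_(q in S) nfa_delta A q a.

Definition nfa_reach (Sigma Q : finType) (A : nfa Sigma Q) (w : seq Sigma) : {set Q} :=
  foldl (nfa_step A) [set nfa_init A] w.

Definition nfa_lang (Sigma Q : finType) (A : nfa Sigma Q) : lang Sigma :=
  fun w => nfa_reach A w :&: nfa_final A != set0.

Record dfa (Sigma Q : finType) := DFA {
  dfa_init : Q;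
  dfa_delta : Q -> Sigma -> Q;
  dfa_final : {set Q} }.

Definition dfa_lang (Sigma Q : finType) (D : dfa Sigma Q) : lang Sigma :=
  fun w => foldl (dfa_delta D) (dfa_init D) w \in dfa_final D.

Definition minimal_nfa (Sigma Q : finType) (A : nfa Sigma Q) : Prop :=
  forall (Q' : finType) (B : nfa Sigma Q'),
    #|Q'| < #|Q| -> ~ (forall w, nfa_lang B w <-> nfa_lang A w).

Definition min_dfa_size (Sigma : finType) (L : lang Sigma) (alpha : nat) : Prop :=
  (exists (Q : finType) (D : dfa Sigma Q), #|Q| = alpha /\ forall w, dfa_lang D w <-> L w)
  /\ (forall (Q : finType) (D : dfa Sigma Q), #|Q| < alpha ->
        ~ (forall w, dfa_lang D w <-> L w)).

Inductive star_free (Sigma : Type) : lang Sigma -> Prop :=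
  | sf_letter (a : Sigma) : star_free (fun w => w = [:: a])
  | sf_union (L1 L2 : lang Sigma) :
      star_free L1 -> star_free L2 -> star_free (fun w => L1 w \/ L2 w)
  | sf_compl (L : lang Sigma) : star_free L -> star_free (fun w => ~ L w)
  | sf_concat (L1 L2 : lang Sigma) :
      star_free L1 -> star_free L2 ->
      star_free (fun w => exists u v, w = u ++ v /\ L1 u /\ L2 v)
  | sf_ext (L L' : lang Sigma) :
      star_free L -> (forall w, L w <-> L' w) -> star_free L'.

From mathcomp Require Import all_boot zify.
Set Implicit Arguments. Unset Strict Implicit. Unset Printing Implicit Defensive.

(* For [alpha = n] the language of words of length at least [n - 1] over a unary
   alphabet works: its [n]-state chain NFA is already a minimal DFA.
   For [alpha > n] take [n] states and a family [P] of [alpha - 1] nonempty sets of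
   states containing every singleton.  A letter [T] sends every nonempty set of
   states to [T] if [T \in P] and to [set0] otherwise; a letter [q] sends the sets
   containing [q] to the initial (and only final) state.  The reachable subsets are
   [P] and [set0], pairwise separated by the letters [q], so the minimal DFA has
   [alpha] states; the pairs ([set q], q) form a fooling set, so the NFA is minimal;
   and whether a word is accepted depends only on its first letter, its last letter
   and its factors of length two, so the language is local, hence star-free. *)

Lemma setI1_neq0 (T : finType) (S : {set T}) x : (S :&: [set x] != set0) = (x \in S).
Proof. by rewrite setI_eq0 disjoint_sym disjoints1 negbK. Qed.

Lemma set1_neq0 (T : finType) (x : T) : [set x] != set0.
Proof. by apply/set0Pn; exists x; rewrite inE. Qed.

Section AcceptanceFromSubsets.
Variables (Sigma Q : finType) (A : nfa Sigma Q).

Definition accepts_from (S : {set Q}) (u : seq Sigma) : bool :=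
  foldl (nfa_step A) S u :&: nfa_final A != set0.

Lemma nfa_lang_cat x u : nfa_lang A (x ++ u) <-> accepts_from (nfa_reach A x) u.
Proof. by rewrite /nfa_lang /nfa_reach /accepts_from foldl_cat. Qed.

Lemma nfa_stepS (S T : {set Q}) a : S \subset T -> nfa_step A S a \subset nfa_step A T a.
Proof.
by move=> sST; apply/bigcupsP => q qS; rewrite (bigcup_sup q) // (subsetP sST).
Qed.

Lemma foldl_nfa_stepS (S T : {set Q}) w : S \subset T ->
  foldl (nfa_step A) S w \subset foldl (nfa_step A) T w.
Proof. by elim: w S T => //= a w IH S T sST; apply/IH/nfa_stepS. Qed.

Lemma accepts_fromS (S T : {set Q}) w : S \subset T -> accepts_from S w -> accepts_from T w.
Proof.
rewrite /accepts_from => sST; apply: contraNN; rewrite -!subset0 => /(subset_trans _); apply.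
exact/setSI/foldl_nfa_stepS.
Qed.

Lemma mem_foldl_nfa_step (S : {set Q}) w p : p \in foldl (nfa_step A) S w ->
  exists2 q, q \in S & p \in foldl (nfa_step A) [set q] w.
Proof.
elim: w S => [|a w IH] S /=; first by move=> pS; exists p; rewrite ?inE.
move=> /IH [q' /bigcupP [q qS q'q] pq']; exists q => //.
apply: (subsetP (foldl_nfa_stepS w _)) pq'; rewrite sub1set.
by apply/bigcupP; exists q; rewrite ?inE.
Qed.

Lemma accepts_from_state (S : {set Q}) w :
  accepts_from S w -> exists q, (q \in S) && accepts_from [set q] w.
Proof.
case/set0Pn => p; rewrite inE => /andP [/mem_foldl_nfa_step [q qS pq] pF].
by exists q; rewrite qS; apply/set0Pn; exists p; rewrite inE pq.
Qed.

End AcceptanceFromSubsets.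

Section StateLowerBounds.
Variables (Sigma Q : finType) (A : nfa Sigma Q).

(* Fooling set: an equivalent NFA passes, between [x i] and [y i], through a state
   that also accepts [y i]; these states are distinct for distinct [i]. *)
Lemma fooling_set_minimal_nfa (I : finType) (x y : I -> seq Sigma) :
  (forall i, nfa_lang A (x i ++ y i)) ->
  (forall i j, nfa_lang A (x i ++ y j) -> nfa_lang A (x j ++ y i) -> i = j) ->
  #|I| = #|Q| -> minimal_nfa A.
Proof.
move=> accept_xy fool cardI Q' B ltQ eqL.
have ex i : exists q : Q', (q \in nfa_reach B (x i)) && accepts_from B [set q] (y i).
  exact/accepts_from_state/nfa_lang_cat/eqL/accept_xy.
pose f i := xchoose (ex i).
have f_inj : injective f.
  move=> i j fij; have := xchooseP (ex i); have := xchooseP (ex j).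
  rewrite -/(f i) -/(f j) -fij => /andP [rj aj] /andP [ri ai].
  by apply: fool; apply/eqL/nfa_lang_cat; [apply: accepts_fromS aj | apply: accepts_fromS ai];
    rewrite sub1set.
by move: (leq_card f f_inj); rewrite cardI leqNgt ltQ.
Qed.

Definition step_closed (R : {set {set Q}}) :=
  forall S a, S \in R -> nfa_step A S a \in R.

Section ReachableFamily.
Variable R : {set {set Q}}.
Hypothesis R_init : [set nfa_init A] \in R.
Hypothesis R_closed : step_closed R.

Lemma subset_dfa : exists (Q' : finType) (D : dfa Sigma Q'),
  #|Q'| = #|R| /\ forall w, dfa_lang D w <-> nfa_lang A w.
Proof.
pose T := {S : {set Q} | S \in R}.
pose delta (S : T) a : T := exist _ (nfa_step A (val S) a) (R_closed a (valP S)).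
pose D := DFA (exist (fun S => S \in R) _ R_init) delta
              [set S : T | val S :&: nfa_final A != set0].
exists T, D; split; first by rewrite card_sig; apply: eq_card => S; rewrite inE.
have val_foldl w (S : T) : val (foldl delta S w) = foldl (nfa_step A) (val S) w.
  by elim: w S => //= a w IH S; rewrite IH.
by move=> w; rewrite /dfa_lang /nfa_lang /nfa_reach inE val_foldl.
Qed.

(* Myhill-Nerode: reachable, pairwise inequivalent subsets force distinct DFA states. *)
Lemma min_dfa_size_subsets
  (R_reach : forall S, S \in R -> exists w, nfa_reach A w == S)
  (R_distinct : forall S T, S \in R -> T \in R ->
     (forall u, accepts_from A S u = accepts_from A T u) -> S = T) :
  min_dfa_size (nfa_lang A) #|R|.
Proof.
split; first exact: subset_dfa.
move=> Q' D ltQ eqL.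
pose T := {S : {set Q} | S \in R}.
pose W (S : T) := xchoose (R_reach _ (valP S)).
pose g S := foldl (dfa_delta D) (dfa_init D) (W S).
have reach_W S : nfa_reach A (W S) = val S := eqP (xchooseP (R_reach _ (valP S))).
have accepts_W S u : accepts_from A (val S) u <-> dfa_lang D (W S ++ u).
  by rewrite -reach_W -nfa_lang_cat eqL.
have g_inj : injective g.
  have transfer S S' u : g S = g S' -> accepts_from A (val S) u -> accepts_from A (val S') u.
    by move=> eq_g /accepts_W; rewrite /dfa_lang foldl_cat -/(g S) eq_g -foldl_cat => /accepts_W.
  move=> S1 S2 eq_g; apply/val_inj/R_distinct; rewrite ?(valP S1) ?(valP S2) // => u.
  by apply/idP/idP; apply: transfer.
move: (leq_card g g_inj); rewrite card_sig (eq_card (B := R)) => [|S]; last by rewrite inE.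
by rewrite leqNgt ltQ.
Qed.

End ReachableFamily.
End StateLowerBounds.

Section StarFree.
Variable Sigma : finType.
(* Over the empty alphabet not even the empty language is star-free. *)
Variable a0 : Sigma.
Implicit Types (L : lang Sigma) (w : seq Sigma).

Definition catL L1 L2 : lang Sigma := fun w => exists u v, w = u ++ v /\ L1 u /\ L2 v.

Definition letters (p : pred Sigma) : lang Sigma := fun w => exists a, w = [:: a] /\ p a.

Lemma sf_cat L1 L2 : star_free L1 -> star_free L2 -> star_free (catL L1 L2).
Proof. exact: sf_concat. Qed.

Lemma sf_empty : star_free (fun _ : seq Sigma => False).
Proof.
apply: sf_ext (sf_compl (sf_union (sf_letter a0) (sf_compl (sf_letter a0)))) _ => w.
by split => // nor; apply: nor; case: (w =P [:: a0]); [left | right].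
Qed.

Lemma sf_full : star_free (fun _ : seq Sigma => True).
Proof. by apply: sf_ext (sf_compl sf_empty) _ => w; split => // _ []. Qed.

Lemma sf_bigcup (X : eqType) (s : seq X) (F : X -> lang Sigma) :
  (forall x, star_free (F x)) -> star_free (fun w => exists2 x, x \in s & F x w).
Proof.
move=> sfF; elim: s => [|x s IH].
  by apply: sf_ext sf_empty _ => w; split => // [[]].
apply: sf_ext (sf_union (sfF x) IH) _ => w; split.
  by case=> [Fxw | [y ys Fyw]]; [exists x; rewrite ?mem_head | exists y; rewrite ?inE ?ys ?orbT].
by case=> y; rewrite inE => /orP [/eqP -> | ys Fyw]; [left | right; exists y].
Qed.

Lemma sf_letters (p : pred Sigma) : star_free (letters p).
Proof.
apply: sf_ext (sf_bigcup [seq a <- enum Sigma | p a] (@sf_letter Sigma)) _ => w.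
split; first by case=> a; rewrite mem_filter mem_enum andbT => pa ->; exists a.
by case=> a [-> pa]; exists a; rewrite // mem_filter mem_enum pa.
Qed.

Lemma sf_pairs (r : rel Sigma) : star_free (fun w => exists a b, w = [:: a; b] /\ r a b).
Proof.
have sf_pairs_from a : star_free (catL (fun w => w = [:: a]) (letters (r a))).
  exact/sf_cat/sf_letters/sf_letter.
apply: sf_ext (sf_bigcup (enum Sigma) sf_pairs_from) _ => w; split.
  by case=> a _ [_ [_ [-> [-> [b [-> rab]]]]]]; exists a, b.
by case=> a [b [-> rab]]; exists a; rewrite ?mem_enum //; exists [:: a], [:: b]; split; last
  by split; last by exists b.
Qed.

Lemma sf_length_ge k : star_free (fun w => k <= size w).
Proof.
elim: k => [|k IH]; first exact: sf_ext sf_full _.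
apply: sf_ext (sf_cat (sf_letters predT) IH) _ => w; split.
  by case=> _ [v [-> [[a [-> _]] le_kv]]].
by case: w => // a w le_kw; exists [:: a], w; split; last by split; first by exists a.
Qed.

Lemma negb_path_factor (r : rel Sigma) c w :
  ~~ path r c w <-> exists u a b v, c :: w = u ++ [:: a, b & v] /\ ~~ r a b.
Proof.
elim: w c => [|d w IH] c /=.
  by split => // [[[|x [|y u]]] [a [b [v []]]]].
split.
  case rcd: (r c d); last by exists [::], c, d, w; rewrite rcd.
  by move=> /(IH d) [u [a [b [v [e rab]]]]]; exists (c :: u), a, b, v; rewrite e.
case=> [[|x u]] [a [b [v []]]] /=; first by case=> -> -> _ /negbTE ->.
by case=> _ e rab; rewrite negb_and; apply/orP; right; apply/(IH d); exists u, a, b, v.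
Qed.

Section LocalLanguages.
Variables (first : pred Sigma) (r : rel Sigma) (final : pred Sigma).

Definition local_word w : bool :=
  if w is c :: w' then [&& first c, path r c w' & final (last c w')] else true.

Definition bad_first : lang Sigma := catL (letters [pred a | ~~ first a]) (fun _ => True).
Definition bad_factor : lang Sigma :=
  catL (catL (fun _ => True) (fun u => exists a b, u = [:: a; b] /\ ~~ r a b)) (fun _ => True).
Definition bad_last : lang Sigma := catL (fun _ => True) (letters [pred a | ~~ final a]).

Lemma bad_firstE w : bad_first w <-> if w is c :: _ then ~~ first c else false.
Proof.
split; first by case=> u [v [-> [[a [-> fa]] _]]].
by case: w => // c w fc; exists [:: c], w; split => //; split => //; exists c.
Qed.

Lemma bad_factorE w : bad_factor w <-> if w is c :: w' then ~~ path r c w' else false.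
Proof.
split.
  case=> uab [v [-> [[u [ab [-> [_ [a [b [-> rab]]]]]] _]]]].
  case e: ((u ++ [:: a; b]) ++ v) => [|c w']; first by case: u e.
  by apply/negb_path_factor; exists u, a, b, v; rewrite -e -catA.
case: w => // c w /negb_path_factor [u [a [b [v [-> rab]]]]].
exists (u ++ [:: a; b]), v; split; first by rewrite -catA.
by split => //; exists u, [:: a; b]; do 2!split => //; exists a, b.
Qed.

Lemma bad_lastE w : bad_last w <-> if w is c :: w' then ~~ final (last c w') else false.
Proof.
split.
  case=> u [v [-> [_ [a [-> la]]]]].
  case e: (u ++ [:: a]) => [|c w']; first by case: u e.
  by move: (congr1 (last c) e); rewrite cats1 last_rcons /= => <-.
case: w => // c w la; exists (belast c w), [:: last c w]; split; first by rewrite cats1 -lastI.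
by split => //; exists (last c w).
Qed.

Lemma sf_local_word : star_free (fun w => local_word w).
Proof.
have sf_first : star_free bad_first := sf_cat (sf_letters _) sf_full.
have sf_factor : star_free bad_factor := sf_cat (sf_cat sf_full (sf_pairs _)) sf_full.
have sf_last : star_free bad_last := sf_cat sf_full (sf_letters _).
apply: sf_ext (sf_compl (sf_union sf_first (sf_union sf_factor sf_last))) _ => w.
rewrite bad_firstE bad_factorE bad_lastE; case: w => [|c w] /=; first by split => // _ [|[]].
by case: (first c); case: (path r c w); case: (final _); intuition.
Qed.

End LocalLanguages.
End StarFree.

Lemma exists_card_between (T : finType) (A U : {set T}) k :
  A \subset U -> #|A| <= k <= #|U| ->
  exists B : {set T}, [/\ A \subset B, B \subset U & #|B| = k].
Proof.
move=> AU; elim: k => [|k IH].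
  by rewrite leqn0 => /andP [/eqP A0 _]; exists A; rewrite A0.
case/andP; rewrite leq_eqVlt => /orP [/eqP <- _|ltAk kU]; first by exists A; rewrite subxx.
have [B [AB BU cardB]] : exists B : {set T}, [/\ A \subset B, B \subset U & #|B| = k].
  by apply: IH; rewrite -ltnS ltAk ltnW.
have /subsetPn [x xU xB] : ~~ (U \subset B).
  by apply: contraL kU => /subset_leq_card; rewrite cardB -ltnNge ltnS.
exists (x |: B); split; first exact: subset_trans AB (subsetU1 _ _).
  by rewrite subUset sub1set xU.
by rewrite cardsU1 xB cardB.
Qed.

Lemma exists_family_with_singletons (Q : finType) k :
  #|Q| <= k < 2 ^ #|Q| ->
  exists P : {set {set Q}},
    [/\ set0 \notin P, forall q, [set q] \in P & #|P| = k].
Proof.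
move=> /andP [Qk k_lt].
have sub : [set [set q] | q : Q] \subset [set~ set0].
  by apply/subsetP => _ /imsetP [q _ ->]; rewrite !inE; apply/set0Pn; exists q; rewrite inE.
have [|P [singP PU cardP]] := exists_card_between (k := k) sub.
  rewrite card_imset; last exact: set1_inj.
  rewrite cardsC1 -cardsT -powersetT card_powerset cardsT Qk /=.
  by rewrite -ltnS prednK ?expn_gt0.
exists P; split => //; first by apply/negP => /(subsetP PU); rewrite !inE eqxx.
by move=> q; apply: (subsetP singP); apply: imset_f.
Qed.

Section FamilyAutomaton.
Variables (Q : finType) (q0 : Q) (P : {set {set Q}}).
Local Notation letter := ({set Q} + Q)%type.

Definition family_target (c : letter) : {set Q} :=
  if c is inl T then (if T \in P then T else set0) else [set q0].

Definition family_enabled (S : {set Q}) (c : letter) : bool :=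
  if c is inr q then q \in S else S != set0.

Definition family_nfa : nfa letter Q :=
  NFA q0 (fun q c => if family_enabled [set q] c then family_target c else set0) [set q0].

Lemma family_step S c :
  nfa_step family_nfa S c = if family_enabled S c then family_target c else set0.
Proof.
apply/setP => p; apply/bigcupP/idP => [[q qS]|] /=.
  case: c => [T|j] /=; last by rewrite inE; case: eqP => [->|_]; rewrite ?qS ?inE.
  by rewrite set1_neq0; have -> : S != set0 by apply/set0Pn; exists q.
case: c => [T|j] /=; case: ifP => [|_]; rewrite ?inE //.
  by case/set0Pn => q qS pT; exists q; rewrite // set1_neq0.
by move=> jS pq0; exists j; rewrite // inE eqxx inE.
Qed.

Lemma family_enabled0 c : family_enabled set0 c = false.
Proof. by case: c => [T|j]; rewrite /= ?eqxx ?inE. Qed.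

Lemma family_foldl S c w :
  foldl (nfa_step family_nfa) (nfa_step family_nfa S c) w =
  if family_enabled S c && path (fun c d => family_enabled (family_target c) d) c w
  then family_target (last c w) else set0.
Proof.
elim: w S c => [|d w IH] S c /=; first by rewrite family_step andbT.
by rewrite IH family_step; case: (family_enabled S c); rewrite ?family_enabled0.
Qed.

Lemma family_lang w :
  nfa_lang family_nfa w <->
  local_word (family_enabled [set q0]) (fun c d => family_enabled (family_target c) d)
             (fun c => q0 \in family_target c) w.
Proof.
rewrite /nfa_lang /nfa_reach /= setI1_neq0; case: w => [|c w] /=; first by rewrite inE.
by rewrite family_foldl andbA; case: (_ && _); rewrite ?inE.
Qed.

Lemma family_star_free : star_free (nfa_lang family_nfa).
Proof. exact: sf_ext (sf_local_word (inr q0) _ _ _) (fun w => iff_sym (family_lang w)). Qed.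

Lemma family_accepts_test S q : accepts_from family_nfa S [:: inr q] = (q \in S).
Proof.
by rewrite /accepts_from /= family_step setI1_neq0 /=; case: (q \in S); rewrite ?inE ?eqxx.
Qed.

Lemma family_reach_jump T :
  nfa_reach family_nfa [:: inl T] = if T \in P then T else set0.
Proof. by rewrite /nfa_reach /= family_step /= set1_neq0. Qed.

Hypothesis P_set1 : forall q, [set q] \in P.

Lemma family_minimal_nfa : minimal_nfa family_nfa.
Proof.
apply: (@fooling_set_minimal_nfa _ _ _ Q (fun q => [:: inl [set q]]) (fun q => [:: inr q])) => //.
  by move=> q; apply/nfa_lang_cat; rewrite family_reach_jump P_set1 family_accepts_test inE.
by move=> p q /nfa_lang_cat; rewrite family_reach_jump P_set1 family_accepts_test inE => /eqP.
Qed.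

Hypothesis P_neq0 : set0 \notin P.

Lemma family_min_dfa_size : min_dfa_size (nfa_lang family_nfa) #|P|.+1.
Proof.
have <- : #|set0 |: P| = #|P|.+1 by rewrite cardsU1 P_neq0.
apply: min_dfa_size_subsets.
- by rewrite !inE P_set1 orbT.
- move=> S c _; rewrite family_step; case: ifP => _; rewrite !inE ?eqxx //.
  by case: c => [T|q] /=; [case: ifP => TP; rewrite ?TP ?eqxx ?orbT | rewrite P_set1 orbT].
- move=> S; rewrite !inE => /orP [/eqP ->|SP]; [exists [:: inl set0] | exists [:: inl S]];
    by rewrite family_reach_jump ?(negbTE P_neq0) ?SP.
- by move=> S T _ _ eqST; apply/setP => q; rewrite -!family_accepts_test eqST.
Qed.
End FamilyAutomaton.

Section ThresholdAutomaton.
Variable m : nat.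
Local Notation state := 'I_m.+1.

Definition threshold_nfa : nfa unit state :=
  NFA ord0 (fun q _ => [set inord (minn q.+1 m)]) [set ord_max].

Lemma val_inord_minn k : nat_of_ord (inord (minn k m) : state) = minn k m.
Proof. by rewrite inordK // ltnS geq_minr. Qed.

Lemma threshold_foldl (i : state) k :
  foldl (nfa_step threshold_nfa) [set i] (nseq k tt) = [set inord (minn (i + k) m)].
Proof.
elim: k i => [|k IH] i /=.
  by congr [set _]; apply: ord_inj; rewrite val_inord_minn /=; have := ltn_ord i; lia.
rewrite /nfa_step big_set1 IH val_inord_minn; congr [set inord _]; lia.
Qed.

Lemma threshold_accepts (i : state) k :
  accepts_from threshold_nfa [set i] (nseq k tt) = (m <= i + k).
Proof.
rewrite /accepts_from threshold_foldl setI1_neq0 inE.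
by apply/eqP/idP => [/(congr1 val)|le_m]; [|apply: val_inj]; rewrite /= val_inord_minn; lia.
Qed.

Lemma threshold_lang w : nfa_lang threshold_nfa w <-> m <= size w.
Proof.
have -> : w = nseq (size w) tt by apply/all_pred1P/allP => -[].
by rewrite /nfa_lang -/(accepts_from _ _ _) threshold_accepts size_nseq.
Qed.

Lemma threshold_star_free : star_free (nfa_lang threshold_nfa).
Proof. exact: sf_ext (sf_length_ge tt m) (fun w => iff_sym (threshold_lang w)). Qed.

Lemma threshold_minimal_nfa : minimal_nfa threshold_nfa.
Proof.
apply: (@fooling_set_minimal_nfa _ _ _ state (fun i => nseq i tt) (fun i => nseq (m - i) tt)).
- by move=> i; apply/threshold_lang; rewrite size_cat !size_nseq; have := ltn_ord i; lia.
- move=> i j /threshold_lang le_ij /threshold_lang le_ji; apply: ord_inj; move: le_ij le_ji.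
  rewrite !size_cat !size_nseq; have := ltn_ord i; have := ltn_ord j; lia.
- by rewrite card_ord.
Qed.

Lemma threshold_min_dfa_size : min_dfa_size (nfa_lang threshold_nfa) m.+1.
Proof.
have card_singletons : #|[set [set i] | i : state]| = m.+1.
  by rewrite card_imset ?card_ord //; apply: set1_inj.
rewrite -[X in min_dfa_size _ X]card_singletons; apply: min_dfa_size_subsets.
- exact: imset_f.
- by move=> _ [] /imsetP [i _ ->]; rewrite /nfa_step big_set1; apply: imset_f.
- move=> _ /imsetP [i _ ->]; exists (nseq i tt); rewrite /nfa_reach threshold_foldl.
  by apply/eqP; congr [set _]; apply: ord_inj; rewrite val_inord_minn /=; have := ltn_ord i; lia.
- move=> _ _ /imsetP [i _ ->] /imsetP [j _ ->] same; congr [set _]; apply: ord_inj.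
  have [le_im le_jm] := (leq_ord i, leq_ord j).
  move: (same (nseq (m - i) tt)) (same (nseq (m - j) tt)).
  rewrite !threshold_accepts !subnKC // leqnn => /esym/idP le_mji /idP le_mij; lia.
Qed.

End ThresholdAutomaton.

Theorem mainTheorem2 (n alpha : nat) :
  1 <= n -> n <= alpha <= 2 ^ n ->
  exists (Sigma Q : finType) (A : nfa Sigma Q),
    #|Q| = n /\ minimal_nfa A /\ star_free (nfa_lang A) /\
    min_dfa_size (nfa_lang A) alpha.
Proof.
case: n => // m _ /andP [le_n_alpha le_alpha_pow].
case: (ltngtP m.+1 alpha) => [lt_n_alpha|lt_alpha_n|<-].
- have [|P [P_neq0 P_set1 cardP]] := @exists_family_with_singletons 'I_m.+1 alpha.-1.
    by rewrite card_ord; lia.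
  exists _, _, (family_nfa ord0 P); split; first by rewrite card_ord.
  split; first exact: family_minimal_nfa.
  split; first exact: family_star_free.
  by rewrite -(ltn_predK lt_n_alpha) -cardP; apply: family_min_dfa_size.
- by move: lt_alpha_n; rewrite ltnNge le_n_alpha.
- exists _, _, (threshold_nfa m); split; first by rewrite card_ord.
  split; first exact: threshold_minimal_nfa.
  split; first exact: threshold_star_free.
  exact: threshold_min_dfa_size.
Qed.
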